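(* Consider the projected pseudo-gradient descent algorithm described below, with accuracy parameter $\epsilon \in (0,1)$. In every descent step $t$, the computed pseudo-gradient $\widehat G$ equals the exact gradient (with respect to $\beta$, at $\beta = \beta^{(t)}$) of $F(\beta, X^{(t)})$ for some labeled point set $X^{(t)}$ that is an $\epsilon$-perturbation of $X$ (with the same labels).
   Context: Setting: $X = \{x_1,\dots,x_N\}$ is the set of rows of a design matrix $J = T_1\Join\cdots\Join T_m$, each row a point in $[-1,1]^d$ with label $y_i \in\{-1,1\}$; $\lambda>0$. For a labeled point set $X$, $F(\beta, X) = \frac{1}{N}\sum_i \max(0,1-y_i\beta\cdot x_i) + \lambda\|\beta\|_2^2$, with gradient $\nabla_\beta F(\beta,X) = 2\lambda\beta - \frac{1}{N}\sum_{i:\ 1-y_i\beta\cdot x_i\ge 0} y_i x_i$. For a vector $v$, $|v|$ denotes the vector of entrywise absolute values. A point $p$ is an $\epsilon$-perturbation of $q$ if $p_j = c_j q_j$ with $c_j \in [1-\epsilon,1+\epsilon]$ for every coordinate $j$; a point set $X_a$ is an $\epsilon$-perturbation of $X_b$ if there is a label-preserving bijection mapping each point to an $\epsilon$-perturbation of it. For $j\in[d]$, $D(j)$ is the set of values occurring in column $j$. Pseudo-gradient at $\beta^{(t)}$: (1) For each $j\in[d]$, $v \in D(j)$, compute a $(1+\epsilon)$-approximation $\widehat C^-_{j,v}$ (i.e. $C/(1+\epsilon)\le \widehat C\le(1+\epsilon)C$) of $C^-_{j,v}$, the number of rows $x$ with label $-1$, value $v$ in column $j$, and $1+\beta^{(t)}\cdot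 x \ge \epsilon|\beta^{(t)}|\cdot|x|$. (2) Similarly $\widehat C^+_{j,v}$ approximates $C^+_{j,v}$, the number of rows with label $+1$, value $v$ in column $j$, and $1-\beta^{(t)}\cdot x\ge \epsilon|\beta^{(t)}|\cdot|x|$. (3) $\widehat G^-_k = \sum_{v\in D(k),v<0} v\widehat C^-_{k,v} - \sum_{v\in D(k), v\ge 0} v\widehat C^+_{k,v}$. (4) $\widehat G^+_k = \sum_{v\in D(k),v\ge0} v\widehat C^-_{k,v} - \sum_{v\in D(k),v<0} v\widehat C^+_{k,v}$. (5) $\widehat G = \frac{\widehat G^- + \widehat G^+}{N} + 2\lambda\beta^{(t)}$. Descent: $\beta^{(0)}=0$, $\beta^{(t+1)} = \Pi_{\mathcal K}(\beta^{(t)} - \eta_{t+1}\widehat G)$ with $\eta_t = \frac{1}{\lambda\sqrt{dt}}$ and $\mathcal K$ the ball of radius $\frac{\sqrt d}{2\lambda}$ centered at the origin. *)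

From HB Require Import structures.
From mathcomp Require Import all_boot all_order all_algebra.
From mathcomp Require Import reals.
Set Implicit Arguments. Unset Strict Implicit. Unset Printing Implicit Defensive.
Import Order.TTheory GRing.Theory Num.Theory.
Local Open Scope ring_scope.

Section Defs.
Variables (R : realType) (N d : nat).

Definition point := 'I_d -> R.

Definition dot (b x : point) : R := \sum_(j < d) b j * x j.
Definition absdot (b x : point) : R := \sum_(j < d) `|b j| * `|x j|.
Definition norm2 (b : point) : R := Num.sqrt (\sum_(j < d) b j ^+ 2).

Definition F (lam : R) (X : 'I_N -> point) (y : 'I_N -> R) (b : point) : R :=
  N%:R^-1 * (\sum_(i < N) Num.max 0 (1 - y i * dot b (X i)))
  + lam * (\sum_(j < d) b j ^+ 2).

Definition gradF (lam : R) (X : 'I_N -> point) (y : 'I_N -> R) (b : point)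
  : point := fun k =>
  2%:R * lam * b k
  - N%:R^-1 * (\sum_(i < N | 0 <= 1 - y i * dot b (X i)) y i * X i k).

Definition D (X : 'I_N -> point) (j : 'I_d) : seq R :=
  undup [seq X i j | i <- enum 'I_N].

Definition Cminus (eps : R) (X : 'I_N -> point) (y : 'I_N -> R) (b : point)
  (j : 'I_d) (v : R) : R :=
  #|[set i : 'I_N | (y i == -1) && (X i j == v)
                    && (eps * absdot b (X i) <= 1 + dot b (X i))]|%:R.
Definition Cplus (eps : R) (X : 'I_N -> point) (y : 'I_N -> R) (b : point)
  (j : 'I_d) (v : R) : R :=
  #|[set i : 'I_N | (y i == 1) && (X i j == v)
                    && (eps * absdot b (X i) <= 1 - dot b (X i))]|%:R.

Definition approx (eps C Chat : R) : Prop :=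
  C / (1 + eps) <= Chat <= (1 + eps) * C.

Definition Gminus (X : 'I_N -> point) (Cm Cp : 'I_d -> R -> R) (k : 'I_d) : R :=
  \sum_(v <- D X k | v < 0) v * Cm k v - \sum_(v <- D X k | 0 <= v) v * Cp k v.
Definition Gplus (X : 'I_N -> point) (Cm Cp : 'I_d -> R -> R) (k : 'I_d) : R :=
  \sum_(v <- D X k | 0 <= v) v * Cm k v - \sum_(v <- D X k | v < 0) v * Cp k v.
Definition Ghat (lam : R) (X : 'I_N -> point) (Cm Cp : 'I_d -> R -> R)
  (b : point) : point := fun k =>
  (Gminus X Cm Cp k + Gplus X Cm Cp k) / N%:R + 2%:R * lam * b k.

Definition proj_ball (r : R) (b : point) : point :=
  if norm2 b <= r then b else fun j => r / norm2 b * b j.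

Definition eta (lam : R) (t : nat) : R := (lam * Num.sqrt (d%:R * t%:R))^-1.

(* descent iterates; Cm t, Cp t are the approximate counts used at step t *)
Fixpoint descent (lam : R) (X : 'I_N -> point)
  (Cm Cp : nat -> 'I_d -> R -> R) (t : nat) : point :=
  match t with
  | 0 => fun _ => 0
  | t'.+1 =>
      let b := descent lam X Cm Cp t' in
      let G := Ghat lam X (Cm t') (Cp t') b in
      proj_ball (Num.sqrt d%:R / (2%:R * lam))
        (fun j => b j - eta lam t'.+1 * G j)
  end.

Definition pt_perturb (eps : R) (p q : point) : Prop :=
  exists c : 'I_d -> R, forall j, 1 - eps <= c j <= 1 + eps /\ p j = c j * q j.

Definition set_perturb (eps : R) (Xa : 'I_N -> point) (ya : 'I_N -> R)
  (Xb : 'I_N -> point) (yb : 'I_N -> R) : Prop :=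
  exists s : 'I_N -> 'I_N, bijective s /\
    forall i, ya (s i) = yb i /\ pt_perturb eps (Xa (s i)) (Xb i).

End Defs.

From HB Require Import structures.
From mathcomp Require Import all_boot all_order all_algebra.
From mathcomp Require Import reals ring lra.
Set Implicit Arguments.
Unset Strict Implicit.
Unset Printing Implicit Defensive.
Import Order.TTheory GRing.Theory Num.Theory.
Local Open Scope ring_scope.

(* A row x_i enters the pseudo-gradient iff it has the margin
   eps |beta|.|x_i| <= 1 - y_i beta.x_i.  Scaling every coordinate by a factor
   in [1 - eps, 1 + eps] moves y_i beta.x_i by at most eps |beta|.|x_i|, so such
   a row stays active for the hinge loss under any eps-perturbation, while a
   row without the margin is made inactive by the extreme perturbation that
   raises y_i beta.x_i by exactly eps |beta|.|x_i|.  Finally the active rows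
   with label y_i and value v in column k get their k-th coordinate scaled by
   Chat/C, which lies in [1 - eps, 1 + eps] and turns their total contribution
   v C to the exact gradient into the contribution v Chat of the
   pseudo-gradient. *)

Lemma sum_partition_seq (V : nmodType) (I : finType) (T : eqType) (s : seq T)
    (f : I -> T) (P : pred I) (F : I -> V) :
  uniq s -> (forall i, P i -> f i \in s) ->
  \sum_(i | P i) F i = \sum_(v <- s) \sum_(i | P i && (f i == v)) F i.
Proof.
move=> s_uniq f_in_s; under [RHS]eq_bigr do rewrite big_mkcondr.
rewrite exchange_big /=; apply: eq_bigr => i Pi.
rewrite -big_mkcond big_const_seq (eq_count (a2 := pred1 (f i))); last first.
  by move=> v; rewrite /= eq_sym.
by rewrite count_uniq_mem ?f_in_s //= addr0.
Qed.

Section Approximation.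
Variables (R : realType) (eps : R).
Hypothesis eps_ge0 : 0 <= eps.

Lemma approx0 (Ch : R) : approx eps 0 Ch -> Ch = 0.
Proof. by rewrite /approx mul0r mulr0 => /andP[Ch_ge0 Ch_le0]; apply/le_anti/andP. Qed.

Lemma approx_divfK (C Ch : R) : approx eps C Ch -> Ch / C * C = Ch.
Proof.
have [-> /approx0 ->|C_neq0 _] := eqVneq C 0; first by rewrite !mul0r.
by rewrite divfK.
Qed.

Lemma approx_ratio_bounds (C Ch : R) : 0 < C -> approx eps C Ch ->
  1 - eps <= Ch / C <= 1 + eps.
Proof.
move=> C_gt0 /andP[lo hi]; have eps1_gt0 : 0 < 1 + eps by move: eps_ge0; lra.
rewrite ler_pdivlMr // ler_pdivrMr // mulrC hi andbT.
apply: le_trans lo; rewrite ler_pdivlMr //.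
have := mulr_ge0 (mulr_ge0 eps_ge0 eps_ge0) (ltW C_gt0); nra.
Qed.

Lemma sumr_approx_ratio (I : finType) (A : {set I}) (Ch v : R) :
  approx eps #|A|%:R Ch -> \sum_(i in A) Ch / #|A|%:R * v = v * Ch.
Proof.
move=> /approx_divfK C_K.
by rewrite sumr_const -mulrnAl -[Ch / _ *+ _]mulr_natr C_K mulrC.
Qed.

End Approximation.

Section DotPerturbation.
Variables (R : realType) (d : nat) (eps : R) (b x : point R d).

Lemma dot_scale_dev (c : 'I_d -> R) : (forall j, `|c j - 1| <= eps) ->
  `|dot b (fun j => c j * x j) - dot b x| <= eps * absdot b x.
Proof.
move=> c_near1; rewrite /dot /absdot -sumrB mulr_sumr.
apply: le_trans (ler_norm_sum _ _ _) _; apply: ler_sum => j _.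
have -> : b j * (c j * x j) - b j * x j = (c j - 1) * (b j * x j) by ring.
by rewrite !normrM; apply: ler_wpM2r; rewrite ?mulr_ge0.
Qed.

Definition margin_factor (s : R) (j : 'I_d) : R :=
  1 + eps * (if 0 <= s * b j * x j then 1 else -1).

Lemma dot_margin_factor (s : R) : `|s| = 1 ->
  s * dot b (fun j => margin_factor s j * x j) = s * dot b x + eps * absdot b x.
Proof.
move=> s_unit; rewrite /dot /absdot !mulr_sumr -big_split /=.
apply: eq_bigr => j _; rewrite /margin_factor.
have -> : `|b j| * `|x j| = `|s * b j * x j| by rewrite !normrM s_unit mul1r.
case: ifP => [sbx_ge0|/negbT]; first by rewrite ger0_norm //; ring.
by rewrite -ltNge => /ltr0_norm ->; ring.
Qed.

End DotPerturbation.

Lemma mem_D (R : realType) (N d : nat) (X : 'I_N -> point R d) i j :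
  X i j \in D X j.
Proof. by rewrite mem_undup; apply/mapP; exists i; rewrite ?mem_enum. Qed.

Lemma Gminus_add_Gplus (R : realType) (N d : nat) (X : 'I_N -> point R d)
    (Cm Cp : 'I_d -> R -> R) (k : 'I_d) :
  Gminus X Cm Cp k + Gplus X Cm Cp k =
  \sum_(v <- D X k) v * Cm k v - \sum_(v <- D X k) v * Cp k v.
Proof.
have geq0E (F : R -> R) :
  \sum_(v <- D X k | ~~ (v < 0)) F v = \sum_(v <- D X k | 0 <= v) F v.
  by apply: eq_bigl => v; rewrite leNgt.
rewrite /Gminus /Gplus !(bigID (fun v => v < 0) xpredT) /= !geq0E; lra.
Qed.

Section PerturbedRows.
Variables (R : realType) (N d : nat) (X : 'I_N -> point R d) (y : 'I_N -> R).
Variables (eps : R) (b : point R d) (Cm Cp : 'I_d -> R -> R).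
Hypothesis y_sign : forall i, y i = 1 \/ y i = -1.
Hypothesis eps_ge0 : 0 <= eps.
Hypothesis C_approx : forall j v, v \in D X j ->
  approx eps (Cminus eps X y b j v) (Cm j v) /\
  approx eps (Cplus eps X y b j v) (Cp j v).

Definition counted (i : 'I_N) : bool :=
  eps * absdot b (X i) <= 1 - y i * dot b (X i).

Definition row_factor (i : 'I_N) (j : 'I_d) : R :=
  if counted i then
    if y i == 1 then Cp j (X i j) / Cplus eps X y b j (X i j)
    else Cm j (X i j) / Cminus eps X y b j (X i j)
  else margin_factor eps b (X i) (y i) j.

Definition Xpert (i : 'I_N) : point R d := fun j => row_factor i j * X i j.

Lemma y_norm i : `|y i| = 1.
Proof. by case: (y_sign i) => ->; rewrite ?normrN normr1. Qed.

Lemma N1_eq1F : ((-1 : R) == 1) = false.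
Proof. by apply/negP => /eqP; lra. Qed.

Lemma counted_pos i : y i = 1 ->
  counted i = (eps * absdot b (X i) <= 1 - dot b (X i)).
Proof. by rewrite /counted => ->; rewrite mul1r. Qed.

Lemma counted_neg i : y i = -1 ->
  counted i = (eps * absdot b (X i) <= 1 + dot b (X i)).
Proof. by rewrite /counted => ->; rewrite mulN1r opprK. Qed.

Lemma row_factor_bounds i j : 1 - eps <= row_factor i j <= 1 + eps.
Proof.
rewrite /row_factor; case: ifP => [counted_i|_]; last first.
  by rewrite /margin_factor; move: eps_ge0; case: ifP => _; lra.
have [Cm_approx Cp_approx] := C_approx (mem_D X i j).
case: (y_sign i) => yi; rewrite yi ?eqxx ?N1_eq1F;
  apply: approx_ratio_bounds => //; rewrite ltr0n; apply/card_gt0P;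
  by exists i; rewrite inE yi !eqxx /= -?counted_pos -?counted_neg.
Qed.

Lemma Xpert_active i : (0 <= 1 - y i * dot b (Xpert i)) = counted i.
Proof.
have [counted_i|uncounted_i] := boolP (counted i).
  have : `|y i * dot b (Xpert i) - y i * dot b (X i)| <= eps * absdot b (X i).
    rewrite -mulrBr normrM y_norm mul1r; apply: dot_scale_dev => j.
    by have := row_factor_bounds i j; rewrite ler_norml; lra.
  by rewrite ler_norml; move: counted_i; rewrite /counted; lra.
rewrite /Xpert /row_factor (negbTE uncounted_i) dot_margin_factor ?y_norm //.
by apply/negbTE; move: uncounted_i; rewrite /counted -!ltNge; lra.
Qed.

Lemma sum_counted_value k v : v \in D X k ->
  \sum_(i | counted i && (X i k == v)) y i * Xpert i k =
  v * Cp k v - v * Cm k v.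
Proof.
move=> /C_approx[Cm_approx Cp_approx].
rewrite (bigID (fun i => y i == 1)) /=.
rewrite -(sumr_approx_ratio v Cp_approx) -(sumr_approx_ratio v Cm_approx).
rewrite -sumrN; congr (_ + _); apply: eq_big => i.
- rewrite inE; case: (y_sign i) => yi; rewrite yi ?eqxx ?N1_eq1F ?andbF //=.
  by rewrite andbT counted_pos // andbC.
- move=> /andP[/andP[counted_i /eqP Xik] /eqP yi].
  by rewrite /Xpert /row_factor counted_i yi eqxx Xik mul1r.
- rewrite inE; case: (y_sign i) => yi; rewrite yi ?eqxx ?N1_eq1F /=.
  + by rewrite andbF [1 == _]eq_sym N1_eq1F.
  + by rewrite andbT counted_neg // andbC.
- move=> /andP[/andP[counted_i /eqP Xik] yi_neq1].
  have yi : y i = -1 by case: (y_sign i) yi_neq1 => ->; rewrite ?eqxx.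
  by rewrite /Xpert /row_factor counted_i yi N1_eq1F Xik mulN1r.
Qed.

Lemma sum_active_Xpert k :
  \sum_(i | 0 <= 1 - y i * dot b (Xpert i)) y i * Xpert i k =
  \sum_(v <- D X k) v * Cp k v - \sum_(v <- D X k) v * Cm k v.
Proof.
under eq_bigl do rewrite Xpert_active.
rewrite (@sum_partition_seq _ _ _ (D X k) (fun i => X i k)) ?undup_uniq //.
  rewrite -sumrB big_seq [RHS]big_seq.
  by apply: eq_bigr => v /sum_counted_value.
by move=> i _; exact: mem_D.
Qed.

Lemma Xpert_perturb : set_perturb eps Xpert y X y.
Proof.
exists id; split; first by exists id.
move=> i; split=> //; exists (row_factor i) => j; split=> //.
exact: row_factor_bounds.
Qed.

Lemma Ghat_eq_gradF lam : Ghat lam X Cm Cp b = gradF lam Xpert y b.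
Proof.
apply: boolp.funext => k.
by rewrite /Ghat /gradF Gminus_add_Gplus sum_active_Xpert; ring.
Qed.

End PerturbedRows.

Theorem lemma2 (R : realType) (N d : nat) (X : 'I_N -> point R d)
  (y : 'I_N -> R) (lam eps : R)
  (Cm Cp : nat -> 'I_d -> R -> R) :
  (forall i j, -1 <= X i j <= 1) ->
  (forall i, y i = 1 \/ y i = -1) ->
  0 < lam -> 0 < eps < 1 ->
  (forall t j v, v \in D X j ->
     approx eps (Cminus eps X y (descent lam X Cm Cp t) j v) (Cm t j v) /\
     approx eps (Cplus eps X y (descent lam X Cm Cp t) j v) (Cp t j v)) ->
  forall t, exists (X' : 'I_N -> point R d) (y' : 'I_N -> R),
    set_perturb eps X' y' X y /\
    Ghat lam X (Cm t) (Cp t) (descent lam X Cm Cp t)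
      = gradF lam X' y' (descent lam X Cm Cp t).
Proof.
move=> _ y_sign _ /andP[/ltW eps_ge0 _] C_approx t.
exists (Xpert X y eps (descent lam X Cm Cp t) (Cm t) (Cp t)), y.
split; [exact: Xpert_perturb y_sign eps_ge0 (C_approx t) |].
exact: Ghat_eq_gradF y_sign eps_ge0 (C_approx t) lam.
Qed.
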